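(* For every $n\ge 2$, $f_{0,n}=(2n-4)!!$ and, for every $k=1,\dots,n-2$, $$f_{k,n}=\frac{(2n-k-5)!\,k}{(2n-2k-4)!!}\cdot{}_3F_2\!\left(\begin{array}{l}1,\ 2-n,\ k+2-n\\ \frac{k+5}{2}-n,\ \frac{k}{2}-n+3\end{array};1\right).$$
   Context: $\mathcal{T}_n$ is the set of fully resolved (binary) rooted trees with leaves bijectively labeled by $\{1,\dots,n\}$. For leaves $i\ne j$, $\varphi_T(i,j)$ is the depth (number of arcs from the root) of their lowest common ancestor. For $k\ge 0$, $f_{k,n}=|\{T\in\mathcal{T}_n:\varphi_T(1,2)=k\}|$. Double factorial: $(2m)!!=(2m)(2m-2)\cdots2$, $0!!=1$. The generalized hypergeometric function is ${}_pF_q\left(\begin{smallmatrix}a_1,\dots,a_p\\ b_1,\dots,b_q\end{smallmatrix};z\right)=\sum_{m\ge0}\frac{(a_1)_m\cdots(a_p)_m}{(b_1)_m\cdots(b_q)_m}\frac{z^m}{m!}$ with $(a)_0=1$, $(a)_m=a(a+1)\cdots(a+m-1)$; in the formula above the series terminates, being understood as the finite sum over $m=0,\dots,n-k-2$ (beyond which the factor $(k+2-n)_m$ vanishes; for these $m$ the denominators are nonzero). *)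

From Stdlib Require Import List Permutation.
From mathcomp Require Import all_boot all_order all_algebra.
Set Implicit Arguments. Unset Strict Implicit. Unset Printing Implicit Defensive.
Import Order.TTheory GRing.Theory Num.Theory.

Inductive tree : Type :=
| Leaf : nat -> tree
| Node : tree -> tree -> tree.

Fixpoint leaves (t : tree) : list nat :=
  match t with
  | Leaf l => [:: l]
  | Node a b => leaves a ++ leaves b
  end.

Definition min_leaf (t : tree) : nat :=
  match leaves t with
  | [::] => 0
  | x :: s => foldr minn x s
  end.

(* Canonical representative of an unordered (non-planar) tree: at every
   internal node, the child containing the smallest label comes first. *)
Fixpoint canonical (t : tree) : Prop :=
  match t with
  | Leaf _ => True
  | Node a b => canonical a /\ canonical b /\ (min_leaf a < min_leaf b)%N
  end.

Definition in_Tn (n : nat) (t : tree) : Prop :=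
  canonical t /\ Permutation (leaves t) (iota 1 n).

Fixpoint lca_depth (t : tree) (i j : nat) : nat :=
  match t with
  | Leaf _ => 0
  | Node a b =>
      if (i \in leaves a) && (j \in leaves a) then (lca_depth a i j).+1
      else if (i \in leaves b) && (j \in leaves b) then (lca_depth b i j).+1
      else 0
  end.

Definition has_card (P : tree -> Prop) (c : nat) : Prop :=
  exists s : list tree, NoDup s /\ (forall t, In t s <-> P t) /\ length s = c.

Definition f_is (k n c : nat) : Prop :=
  has_card (fun t => in_Tn n t /\ lca_depth t 1 2 = k) c.

Fixpoint dfact (m : nat) : nat :=
  match m with
  | 0 => 1
  | 1 => 1
  | (p.+2) as q => q * dfact p
  end.

Local Open Scope ring_scope.

Definition poch (a : rat) (m : nat) : rat := \prod_(i < m) (a + i%:R).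

(* terminating 3F2 at z = 1, summed over m = 0..N *)
Definition hyp3F2 (a1 a2 a3 b1 b2 : rat) (N : nat) : rat :=
  \sum_(m < N.+1)
     (poch a1 m * poch a2 m * poch a3 m) / (poch b1 m * poch b2 m) / (m`!)%:R.

(* Every tree on n.+1 leaves arises in exactly one way by grafting the leaf
   n.+1 onto one of the 2n - 1 edges of a tree on n leaves (counting an edge
   above the root), and this raises the depth d of the common ancestor of 1 and
   2 exactly for the d + 1 edges above that ancestor.  Hence
     f_{0,n+1} = (2n - 2) f_{0,n},
     f_{k+1,n+1} = (k + 1) f_{k,n} + (2n - 3 - k) f_{k+1,n}.
   The first recurrence gives the double factorial.  The second is solved by
     f_{k,n} = k (n-2)! 2^(n-k-2) sum_(j <= n-k-2) (2j+k-1)! / ((j+k)! j! 4^j),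
   which satisfies it thanks to a telescoping identity between the sums for k
   and k + 1; summing in reverse order turns this sum into the 3F2. *)

From Stdlib Require Import List Permutation.
From HB Require Import structures.
From mathcomp Require Import all_boot all_order all_algebra.
From mathcomp Require Import zify ring.
Import Order.TTheory GRing.Theory Num.Theory.
Set Implicit Arguments. Unset Strict Implicit. Unset Printing Implicit Defensive.

Definition tree_eq_dec : comparable tree.
Proof. by move=> s t; rewrite /decidable; decide equality; apply: PeanoNat.Nat.eq_dec. Defined.

HB.instance Definition _ := comparableMixin tree_eq_dec.

Lemma size_leaves_gt0 t : 0 < size (leaves t).
Proof. by elim: t => //= a IHa b _; rewrite size_cat ltn_addr. Qed.

Lemma foldr_minnP x s :
  foldr minn x s \in x :: s /\ {in x :: s, forall y, foldr minn x s <= y}.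
Proof.
elim: s => [|z s [IHin IHle]]; first by split=> [|y]; rewrite /= ?mem_head // inE => /eqP->.
have -> : foldr minn x (z :: s) = minn z (foldr minn x s) by [].
split=> [|y].
  case: leqP => _; first by rewrite !inE eqxx orbT.
  by move: IHin; rewrite !inE => /orP[]->; rewrite ?orbT.
rewrite geq_min !inE => /or3P[/eqP->|/eqP->|y_s]; rewrite ?leqnn ?orbT //.
- by rewrite IHle ?mem_head ?orbT.
- by rewrite IHle ?inE ?y_s ?orbT.
Qed.

Lemma min_leafP t :
  min_leaf t \in leaves t /\ {in leaves t, forall y, min_leaf t <= y}.
Proof.
rewrite /min_leaf; have := size_leaves_gt0 t.
by case: (leaves t) => // x s _; apply: foldr_minnP.
Qed.

Lemma min_leaf_eq t m :
  m \in leaves t -> {in leaves t, forall y, m <= y} -> min_leaf t = m.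
Proof.
have [min_in min_le] := min_leafP t => m_in m_le.
by apply/eqP; rewrite eqn_leq min_le // m_le.
Qed.

Fixpoint insert_leaf (x : nat) (t : tree) : seq tree :=
  Node t (Leaf x) ::
  if t is Node a b then
    [seq Node s b | s <- insert_leaf x a] ++ [seq Node a s | s <- insert_leaf x b]
  else [::].

Lemma insert_leaf_Node x a b : insert_leaf x (Node a b) =
  Node (Node a b) (Leaf x) ::
  [seq Node s b | s <- insert_leaf x a] ++ [seq Node a s | s <- insert_leaf x b].
Proof. by []. Qed.

Lemma insert_leafP x a b s :
  s \in insert_leaf x (Node a b) ->
  [\/ s = Node (Node a b) (Leaf x),
      exists2 s', s' \in insert_leaf x a & s = Node s' b
    | exists2 s', s' \in insert_leaf x b & s = Node a s'].
Proof.
rewrite inE mem_cat => /orP[/eqP->|/orP[/mapP[s' ? ->]|/mapP[s' ? ->]]].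
- exact: Or31.
- by apply: Or32; exists s'.
- by apply: Or33; exists s'.
Qed.

Lemma mem_insert_root x t : Node t (Leaf x) \in insert_leaf x t.
Proof. by case: t => *; apply: mem_head. Qed.

Lemma Leaf_notin_insert x y t : Leaf y \notin insert_leaf x t.
Proof.
case: t => [l|a b]; rewrite inE //= mem_cat.
by apply/orP=> -[/mapP[? _ //]|/mapP[? _ //]].
Qed.

Lemma perm_leaves_insert x t s :
  s \in insert_leaf x t -> perm_eq (leaves s) (rcons (leaves t) x).
Proof.
elim: t s => [l|a IHa b IHb] s; first by rewrite inE => /eqP->.
case/insert_leafP=> [->|[s' s'_a ->]|[s' s'_b ->]] /=; first by rewrite cats1.
- rewrite (perm_catr _ (IHa _ s'_a)) rcons_cat -cats1 -catA perm_cat2l.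
  by rewrite -cats1 perm_catC.
- by rewrite rcons_cat perm_cat2l IHb.
Qed.

Lemma mem_leaves_insert x t s i :
  s \in insert_leaf x t -> (i \in leaves s) = (i \in leaves t) || (i == x).
Proof. by move/perm_leaves_insert/perm_mem->; rewrite mem_rcons inE orbC. Qed.

Lemma size_insert_leaf x t : (size (insert_leaf x t)).+1 = 2 * size (leaves t).
Proof.
elim: t => [//|a IHa b IHb] /=.
by rewrite size_cat !size_map size_cat; have := size_leaves_gt0 a; lia.
Qed.

Lemma uniq_insert_leaf x t : x \notin leaves t -> uniq (insert_leaf x t).
Proof.
elim: t => [//|a IHa b IHb]; rewrite /= mem_cat negb_or => /andP[x_a x_b].
rewrite cat_uniq !map_inj_uniq ?IHa ?IHb //; try by move=> ? ? [].
rewrite mem_cat negb_or /= andbT -andbA; apply/and3P; split.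
- by apply/mapP=> -[s' _ [_ b_x]]; rewrite -b_x inE eqxx in x_b.
- apply/mapP=> -[s' s'_b [_ s'E]].
  by rewrite -s'E (negPf (Leaf_notin_insert _ _ _)) in s'_b.
apply/hasPn=> _ /mapP[s2 s2_b ->]; apply/mapP=> -[s1 s1_a [s1E _]].
by rewrite s1E (mem_leaves_insert _ s1_a) eqxx orbT in x_a.
Qed.

Fixpoint prune (x : nat) (t : tree) : tree :=
  if t is Node a b then
    if b == Leaf x then a else Node (prune x a) (prune x b)
  else t.

Lemma prune_id x t : x \notin leaves t -> prune x t = t.
Proof.
elim: t => //= a IHa b IHb; rewrite mem_cat negb_or => /andP[x_a x_b].
case: eqP x_b => [->|_ x_b]; first by rewrite inE eqxx.
by rewrite IHa ?IHb.
Qed.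

Lemma prune_insert x t s : x \notin leaves t -> s \in insert_leaf x t -> prune x s = t.
Proof.
elim: t s => [l|a IHa b IHb] s x_t; first by rewrite inE => /eqP-> /=; rewrite eqxx.
move: (x_t); rewrite /= mem_cat negb_or => /andP[x_a x_b].
case/insert_leafP=> [->|[s' s'_a ->]|[s' s'_b ->]] /=; first by rewrite eqxx.
- case: eqP x_b => [->|_ x_b]; first by rewrite /= inE eqxx.
  by rewrite (IHa s') // prune_id.
- case: eqP s'_b => [->|_ s'_b]; first by rewrite (negPf (Leaf_notin_insert _ _ _)).
  by rewrite prune_id // (IHb s').
Qed.

Lemma min_leaf_insert x t s : {in leaves t, forall y, y <= x} ->
  s \in insert_leaf x t -> min_leaf s = min_leaf t.
Proof.
move=> le_x s_t; have [min_in min_le] := min_leafP t.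
apply: min_leaf_eq => [|y]; rewrite (mem_leaves_insert _ s_t) ?min_in //.
by case/orP=> [/min_le//|/eqP->]; apply: le_x.
Qed.

Lemma canonical_insert x t s : canonical t -> {in leaves t, forall y, y < x} ->
  s \in insert_leaf x t -> canonical s.
Proof.
elim: t s => [l|a IHa b IHb] s /= t_can lt_x.
  by rewrite inE => /eqP-> /=; rewrite /min_leaf /= lt_x ?inE.
have [a_can [b_can lt_ab]] := t_can.
have lt_xa : {in leaves a, forall y, y < x} by move=> y y_a; rewrite lt_x ?mem_cat ?y_a.
have lt_xb : {in leaves b, forall y, y < x} by move=> y y_b; rewrite lt_x ?mem_cat ?y_b ?orbT.
case/insert_leafP=> [->|[s' s'_a ->]|[s' s'_b ->]] /=.
- by rewrite {2}/min_leaf /=; have [/lt_x] := min_leafP (Node a b).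
- rewrite (min_leaf_insert _ s'_a) => [|y /lt_xa/ltnW //].
  by split; first exact: IHa s'_a.
- rewrite (min_leaf_insert _ s'_b) => [|y /lt_xb/ltnW //].
  by split=> //; split=> //; exact: IHb s'_b.
Qed.

Lemma insert_leaf_surj x s : canonical s -> x \in leaves s ->
  {in leaves s, forall y, y <= x} -> s != Leaf x ->
  exists2 t, canonical t & s \in insert_leaf x t.
Proof.
elim: s => [l|a IHa b IHb] /=; first by rewrite inE => _ /eqP->; rewrite eqxx.
move=> [a_can [b_can lt_ab]] x_s le_x _.
have le_xa : {in leaves a, forall y, y <= x} by move=> y y_a; rewrite le_x ?mem_cat ?y_a.
have le_xb : {in leaves b, forall y, y <= x} by move=> y y_b; rewrite le_x ?mem_cat ?y_b ?orbT.
have [->|b_neq] := eqVneq b (Leaf x); first by exists a; rewrite ?mem_insert_root.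
move: x_s; rewrite mem_cat => /orP[x_a|x_b].
  have a_neq : a != Leaf x.
    apply: contraTneq lt_ab => ->; rewrite -leqNgt {1}/min_leaf /=.
    by have [/le_xb] := min_leafP b.
  have [t t_can a_t] := IHa a_can x_a le_xa a_neq.
  have le_xt : {in leaves t, forall y, y <= x}.
    by move=> y y_t; apply: le_xa; rewrite (mem_leaves_insert _ a_t) y_t.
  exists (Node t b); first by rewrite /= -(min_leaf_insert le_xt a_t).
  by rewrite inE mem_cat map_f ?orbT.
have [t t_can b_t] := IHb b_can x_b le_xb b_neq.
have le_xt : {in leaves t, forall y, y <= x}.
  by move=> y y_t; apply: le_xb; rewrite (mem_leaves_insert _ b_t) y_t.
exists (Node a t); first by rewrite /= -(min_leaf_insert le_xt b_t).
by rewrite inE mem_cat map_f ?orbT.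
Qed.

Fixpoint Tn_enum (n : nat) : seq tree :=
  match n with
  | 0 => [::]
  | 1 => [:: Leaf 1]
  | m.+1 => flatten [seq insert_leaf n t | t <- Tn_enum m]
  end.

Lemma Tn_enumSS n :
  Tn_enum n.+2 = flatten [seq insert_leaf n.+2 t | t <- Tn_enum n.+1].
Proof. by []. Qed.

Lemma mem_Tn_enum n t : 0 < n ->
  t \in Tn_enum n <-> canonical t /\ perm_eq (leaves t) (iota 1 n).
Proof.
elim: n t => [//|[_ t _|n IHn t _]].
  split=> [|[_ t_1]]; first by rewrite inE => /eqP->.
  case: t t_1 => [l|a b] /[dup] t_1 /perm_size /=.
    by move: t_1 => /perm_mem/(_ l); rewrite /= !inE eqxx => /esym/eqP->.
  by rewrite size_cat; have := size_leaves_gt0 a; have := size_leaves_gt0 b; lia.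
have iotaS : iota 1 n.+2 = rcons (iota 1 n.+1) n.+2.
  by have := iotaD 1 n.+1 1; rewrite addn1 add1n cats1.
have mem_iota_le m : {in iota 1 m, forall y, y <= m}.
  by move=> y; rewrite mem_iota; lia.
rewrite Tn_enumSS; split.
  case/flatten_mapP=> t0 /IHn[//| t0_can t0_leaves] t_t0.
  have lt_t0 : {in leaves t0, forall y, y < n.+2}.
    by move=> y; rewrite (perm_mem t0_leaves) => /mem_iota_le.
  split; first exact: canonical_insert t0_can lt_t0 t_t0.
  by rewrite (permPl (perm_leaves_insert t_t0)) iotaS -!cats1 perm_cat2r.
case=> t_can t_leaves.
have x_t : n.+2 \in leaves t by rewrite (perm_mem t_leaves) mem_iota; lia.
have le_x : {in leaves t, forall y, y <= n.+2}.
  by move=> y; rewrite (perm_mem t_leaves); apply: mem_iota_le.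
have t_neq : t != Leaf n.+2.
  by apply: contraTneq t_leaves => ->; apply/negP => /perm_size; rewrite size_iota.
have [t0 t0_can t_t0] := insert_leaf_surj t_can x_t le_x t_neq.
apply/flatten_mapP; exists t0 => //; apply/IHn => //; split=> //.
by rewrite -(perm_cat2r [:: n.+2]) !cats1 -iotaS -(permPl (perm_leaves_insert t_t0)).
Qed.

Lemma uniq_flatten_map (T U : eqType) (f : T -> seq U) (g : U -> T) (s : seq T) :
  uniq s -> {in s, forall x, uniq (f x)} -> {in s, forall x, {in f x, forall y, g y = x}} ->
  uniq (flatten [seq f x | x <- s]).
Proof.
elim: s => [//|x s IHs] /= /andP[x_s s_uniq] f_uniq g_inv.
rewrite cat_uniq f_uniq ?mem_head //= IHs // => [|z z_s|z z_s]; last 2 first.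
- by apply: f_uniq; rewrite inE z_s orbT.
- by apply: g_inv; rewrite inE z_s orbT.
rewrite andbT; apply/hasPn=> y /flatten_mapP[z z_s y_z]; apply: contra x_s => y_x.
by rewrite -(g_inv x (mem_head _ _) y y_x) (g_inv z _ y y_z) // inE z_s orbT.
Qed.

Lemma uniq_Tn_enum n : uniq (Tn_enum n).
Proof.
elim: n => [//|[//|n] IHn]; rewrite Tn_enumSS.
have notin_t t : t \in Tn_enum n.+1 -> n.+2 \notin leaves t.
  by case/mem_Tn_enum=> // _ /perm_mem->; rewrite mem_iota; lia.
apply: (uniq_flatten_map (g := prune n.+2)) => // t /notin_t.
  exact: uniq_insert_leaf.
by move=> t_n s; apply: prune_insert.
Qed.

Definition depth12 (t : tree) : nat := lca_depth t 1 2.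

Definition has12 (t : tree) : bool := (1 \in leaves t) && (2 \in leaves t).

Lemma depth12_Node a b : depth12 (Node a b) =
  if has12 a then (depth12 a).+1 else if has12 b then (depth12 b).+1 else 0.
Proof. by []. Qed.

Lemma has12_Leaf l : has12 (Leaf l) = false.
Proof. by rewrite /has12 /= !inE; case: eqP => // <-. Qed.

Lemma has12_insert x t s : 2 < x -> s \in insert_leaf x t -> has12 s = has12 t.
Proof.
move=> x_gt2 s_t; rewrite /has12 !(mem_leaves_insert _ s_t).
by rewrite ![_ == x]eq_sym !gtn_eqF ?orbF // ltnW.
Qed.

Lemma depth12_bound t : has12 t -> (depth12 t).+2 <= size (leaves t).
Proof.
elim: t => [l|a IHa b IHb]; first by rewrite has12_Leaf.
rewrite depth12_Node /= size_cat => t12.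
have := size_leaves_gt0 a; have := size_leaves_gt0 b.
case: (boolP (has12 a)) => [/IHa|a12]; first lia.
case: (boolP (has12 b)) => [/IHb|b12]; first lia.
move: t12 a12 b12; rewrite /has12 /= !mem_cat.
by case: (1 \in leaves a); case: (2 \in leaves a); rewrite ?orbT ?orbF //= => _ _ _; lia.
Qed.

Section InsertDepth.

Variables (x : nat) (a b : tree).
Hypothesis x_gt2 : 2 < x.

Lemma map_depth12_insert_l :
  map depth12 [seq Node s b | s <- insert_leaf x a] =
  if has12 a then map succn (map depth12 (insert_leaf x a))
  else nseq (size (insert_leaf x a)) (depth12 (Node a b)).
Proof.
rewrite -!map_comp; case: ifP => a12; first by apply/eq_in_map => s s_a /=;
  rewrite depth12_Node (has12_insert x_gt2 s_a) a12.
rewrite -(size_map (depth12 \o Node^~ b)).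
apply/all_pred1P/allP => _ /mapP[s s_a ->].
by rewrite /= !depth12_Node (has12_insert x_gt2 s_a) a12.
Qed.

Lemma map_depth12_insert_r :
  map depth12 [seq Node a s | s <- insert_leaf x b] =
  if ~~ has12 a && has12 b then map succn (map depth12 (insert_leaf x b))
  else nseq (size (insert_leaf x b)) (depth12 (Node a b)).
Proof.
rewrite -!map_comp; case: ifP => /andP.
  by case=> /negPf a12 b12; apply/eq_in_map => s s_b /=;
    rewrite depth12_Node (has12_insert x_gt2 s_b) a12 b12.
move=> ab12; rewrite -(size_map (depth12 \o Node a)).
apply/all_pred1P/allP => _ /mapP[s s_b ->].
rewrite /= !depth12_Node (has12_insert x_gt2 s_b).
by case: (has12 a) ab12 => [_|]; [rewrite eqxx | case: (has12 b) => // ab12; case: ab12].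
Qed.

End InsertDepth.

Lemma perm_depth12_insert x t : 2 < x -> has12 t ->
  perm_eq (map depth12 (insert_leaf x t))
    (nseq (depth12 t).+1 (depth12 t).+1 ++
     nseq (2 * size (leaves t) - 2 - depth12 t) (depth12 t)).
Proof.
move=> x_gt2; elim: t => [l|a IHa b IHb]; first by rewrite has12_Leaf.
move=> t12; rewrite insert_leaf_Node map_cons map_cat.
rewrite map_depth12_insert_l // map_depth12_insert_r //.
rewrite [depth12 (Node (Node a b) _)]depth12_Node t12 /=.
have := size_insert_leaf x a; have := size_insert_leaf x b.
have := size_leaves_gt0 a; have := size_leaves_gt0 b; rewrite size_cat.
case: (boolP (has12 a)) => [a12|a12] /=.
  have := depth12_bound a12; rewrite !depth12_Node a12 => ? ? ? ? ?.
  rewrite perm_cons (perm_catr _ (perm_map succn (IHa a12))) map_cat !map_nseq.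
  rewrite -catA -nseqD.
  by have -> : (2 * size (leaves a) - 2 - depth12 a + size (insert_leaf x b) =
    2 * (size (leaves a) + size (leaves b)) - 2 - (depth12 a).+1)%N by lia.
case: (boolP (has12 b)) => [b12|b12] /=.
  have := depth12_bound b12; rewrite !depth12_Node (negPf a12) b12 /= => ? ? ? ? ?.
  rewrite perm_cons (perm_catl _ (perm_map succn (IHb b12))) map_cat !map_nseq.
  rewrite perm_catCA perm_cat2l -nseqD.
  by have -> : (size (insert_leaf x a) + (2 * size (leaves b) - 2 - depth12 b) =
    2 * (size (leaves a) + size (leaves b)) - 2 - (depth12 b).+1)%N by lia.
rewrite !depth12_Node (negPf a12) (negPf b12) -nseqD => ? ? ? ?.
by have -> : (size (insert_leaf x a) + size (insert_leaf x b) =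
  2 * (size (leaves a) + size (leaves b)) - 2 - 0)%N by lia.
Qed.

Lemma count_depth12_insert x t k : 2 < x -> has12 t ->
  count (fun s => depth12 s == k) (insert_leaf x t) =
  ((depth12 t).+1 == k) * k + (depth12 t == k) * (2 * size (leaves t) - 2 - k).
Proof.
move=> x_gt2 t12; rewrite -(count_map depth12 (pred1 k)).
rewrite (permP (perm_depth12_insert x_gt2 t12)) count_cat !count_nseq /=.
by congr (_ + _); case: eqP => [->|]; rewrite ?mul0n.
Qed.

Lemma count_depth12_flatten x n k s : 2 < x ->
  {in s, forall t, has12 t /\ size (leaves t) = n} ->
  count (fun s => depth12 s == k) (flatten [seq insert_leaf x t | t <- s]) =
  k * count (fun t => (depth12 t).+1 == k) s +
  (2 * n - 2 - k) * count (fun t => depth12 t == k) s.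
Proof.
move=> x_gt2; elim: s => [|t s IHs] s_ok /=; first by rewrite !muln0.
have [t12 size_t] := s_ok t (mem_head _ _).
rewrite count_cat count_depth12_insert // IHs => [|u u_s]; last first.
  by apply: s_ok; rewrite inE u_s orbT.
by rewrite size_t !mulnDr addnACA ![k * _]mulnC ![(2 * n - 2 - k) * _]mulnC.
Qed.

Lemma Tn_enum_has12 n t : 2 <= n -> t \in Tn_enum n -> has12 t /\ size (leaves t) = n.
Proof.
move=> n_ge2 /mem_Tn_enum[|_ /[dup] /perm_mem t_mem /perm_size->]; first lia.
by rewrite /has12 !t_mem !mem_iota size_iota; split=> //; apply/andP; split; lia.
Qed.

Definition fcount (k n : nat) : nat := count (fun t => depth12 t == k) (Tn_enum n).

Lemma fcount_succ k n : 2 <= n ->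
  fcount k n.+1 =
  k * count (fun t => (depth12 t).+1 == k) (Tn_enum n) + (2 * n - 2 - k) * fcount k n.
Proof.
case: n => [//|n] n_gt1; rewrite /fcount Tn_enumSS (count_depth12_flatten (n := n.+1)) //.
by move=> t; apply: Tn_enum_has12.
Qed.

Lemma fcount0_succ n : 2 <= n -> fcount 0 n.+1 = (2 * n - 2) * fcount 0 n.
Proof. by move/fcount_succ->; rewrite subn0. Qed.

Lemma fcountSS k n : 2 <= n ->
  fcount k.+1 n.+1 = k.+1 * fcount k n + (2 * n - 3 - k) * fcount k.+1 n.
Proof.
move/fcount_succ->; rewrite (eq_count (a2 := fun t => depth12 t == k)) //.
by congr (_ + _ * _); lia.
Qed.

Lemma fcount_dfact n : 2 <= n -> fcount 0 n = dfact (2 * n - 4).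
Proof.
elim: n => [//|n IHn]; rewrite leq_eqVlt => /orP[/eqP[<-]//|n_ge2].
rewrite fcount0_succ // IHn //.
have -> : (2 * n.+1 - 4 = (2 * n - 4).+2)%N by lia.
by rewrite /=; congr (_ * _); lia.
Qed.

Lemma fcount_eq0 k n : 2 <= n -> n <= k.+1 -> fcount k n = 0.
Proof.
move=> n_ge2 n_le; rewrite /fcount (eq_in_count (a2 := pred0)) ?count_pred0 //.
move=> t /(Tn_enum_has12 n_ge2)[t12 size_t]; apply/negbTE/eqP => t_k.
by have := depth12_bound t12; lia.
Qed.

Lemma InP (T : eqType) (x : T) (s : seq T) : reflect (In x s) (x \in s).
Proof.
elim: s => [|y s IHs]; first by constructor.
rewrite inE; apply: (iffP orP) => -[x_y|x_s]; [left | right | left | right].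
- exact/esym/eqP.
- exact/IHs.
- by rewrite x_y.
- exact/IHs.
Qed.

Lemma uniq_NoDup (T : eqType) (s : seq T) : uniq s -> NoDup s.
Proof.
elim: s => [|x s IHs] /=; first by constructor.
by case/andP=> x_s /IHs; constructor=> // /InP; apply/negP.
Qed.

Lemma PermutationP (T : eqType) (s t : seq T) : reflect (Permutation s t) (perm_eq s t).
Proof.
apply: (iffP idP); last first.
  elim=> [//|x l l' _|x y l|l l' l'' _ pl _ pl']; first by rewrite perm_cons.
    by rewrite -[[:: y, x & l]]/([:: y] ++ [:: x] ++ l) perm_catCA.
  exact: perm_trans pl pl'.
elim: s t => [t /perm_size/esym/size0nil-> //|x s IHs t st].
have x_t : x \in t by rewrite -(perm_mem st) mem_head.
move: st; case/splitPr: x_t => t1 t2.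
rewrite -[x :: t2]cat1s perm_sym perm_catCA /= perm_sym perm_cons => st.
exact/Permutation_cons_app/IHs.
Qed.

Lemma length_size (T : Type) (s : seq T) : length s = size s.
Proof. by elim: s => //= _ s ->. Qed.

Lemma f_is_fcount k n : 0 < n -> f_is k n (fcount k n).
Proof.
move=> n_gt0; exists [seq t <- Tn_enum n | depth12 t == k].
split; first by apply/uniq_NoDup; rewrite filter_uniq // uniq_Tn_enum.
split=> [t|]; last by rewrite length_size size_filter.
split=> [/InP|[[t_can /PermutationP t_perm] t_k]]; last first.
  by apply/InP; rewrite mem_filter; apply/andP; split; [apply/eqP | apply/mem_Tn_enum].
by rewrite mem_filter => /andP[/eqP t_k /mem_Tn_enum[// | t_can /PermutationP]].
Qed.

Local Open Scope ring_scope.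

Ltac natr_neq0 :=
  rewrite ?expf_eq0 ?mulf_eq0 ?negb_or;
  do ?[rewrite nat1r | rewrite natr1 | rewrite -natrD];
  rewrite ?pnatr_eq0 -?lt0n ?fact_gt0 ?andbF //.

Lemma natr_fact_neq0 (R : numDomainType) n : (n`!)%:R != 0 :> R.
Proof. by rewrite pnatr_eq0 -lt0n fact_gt0. Qed.

(* [fclosed k r] is the closed form of f_{k+1, k+r+2}, written with the shifted
   indices in which the recurrences take their simplest shape. *)
Definition fterm (j k : nat) : rat := ((2 * j + k)`!)%:R / ((j + k).+1`!%:R * j`!%:R).

Definition fsum (k r : nat) : rat := \sum_(j < r) fterm j k / 4 ^+ j.

Lemma fsum0 k : fsum k 0 = 0.
Proof. by rewrite /fsum big_ord0. Qed.

Lemma fsumS k r : fsum k r.+1 = fsum k r + fterm r k / 4 ^+ r.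
Proof. by rewrite /fsum big_ord_recr. Qed.

Lemma fterm_shift j k : fterm j.+1 k = fterm j k.+1 * (2 * j + k).+2%:R / j.+1%:R.
Proof.
rewrite /fterm.
have -> : (2 * j.+1 + k = (2 * j + k).+2)%N by lia.
have -> : (2 * j + k.+1 = (2 * j + k).+1)%N by lia.
have -> : (j.+1 + k = j + k.+1)%N by lia.
rewrite !factS !natrM.
by field; natr_neq0.
Qed.

Lemma ftermS j k : fterm j.+1 k =
  fterm j k * ((2 * j + k).+1 * (2 * j + k).+2)%:R / ((j + k).+2 * j.+1)%:R.
Proof.
rewrite /fterm.
have -> : (2 * j.+1 + k = (2 * j + k).+2)%N by lia.
by rewrite addSn !factS !natrM; field; natr_neq0.
Qed.

Lemma fsum0E r : fsum 0 r = 2 - 2 * r.+1%:R * fterm r 0 / 4 ^+ r.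
Proof.
elim: r => [|r IHr]; first by rewrite fsum0 /fterm muln0 !addn0 factS fact0 expr0; field.
by rewrite fsumS IHr ftermS exprS; field; natr_neq0.
Qed.

Lemma fsum_shift k r : fsum k r.+1 =
  (k.+2%:R * fsum k.+1 r + 2 * (k + r).+2%:R * fterm r k.+1 / 4 ^+ r) / (2 * k.+1%:R).
Proof.
elim: r => [|r IHr].
  by rewrite fsum0 fsumS fsum0 /fterm !addn0 /= !factS !natrM; field; natr_neq0.
rewrite (fsumS k r.+1) IHr fsumS fterm_shift ftermS exprS addnS.
by rewrite !natrM; field; natr_neq0.
Qed.

Definition fclosed (k r : nat) : rat := (k.+1 * (k + r)`!)%:R * 2 ^+ r / 2 * fsum k r.

Lemma fclosed0 k : fclosed k 0 = 0.
Proof. by rewrite /fclosed fsum0 mulr0. Qed.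

Lemma dfact_double r : dfact (2 * r) = (2 ^ r * r`!)%N.
Proof.
elim: r => [//|r IHr].
have -> : (2 * r.+1 = (2 * r).+2)%N by lia.
by rewrite /= IHr expnS factS; lia.
Qed.

Lemma fclosed0S r : fclosed 0 r.+1 = (dfact (2 * r))%:R + (2 * r).+1%:R * fclosed 0 r.
Proof.
rewrite /fclosed fsumS fsum0E dfact_double !add0n factS.
by rewrite !natrM natrX exprS; field; natr_neq0.
Qed.

Lemma fclosedSS k r : fclosed k.+1 r.+1 =
  k.+2%:R * fclosed k r.+1 + (k + 2 * r).+2%:R * fclosed k.+1 r.
Proof.
rewrite /fclosed fsumS fsum_shift addSn addnS factS.
by rewrite !natrM exprS; field; natr_neq0.
Qed.

Lemma poch0 a : poch a 0 = 1.
Proof. by rewrite /poch big_ord0. Qed.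

Lemma pochS a m : poch a m.+1 = poch a m * (a + m%:R).
Proof. by rewrite /poch big_ord_recr. Qed.

Lemma poch1 m : poch 1 m = m`!%:R.
Proof. by elim: m => [|m IHm]; rewrite ?poch0 // pochS IHm factS natrM nat1r mulrC. Qed.

Lemma pochSl a m : poch a m.+1 = a * poch (a + 1) m.
Proof.
rewrite /poch big_ord_recl addr0; congr (_ * _).
by apply: eq_bigr => i _; rewrite lift0 -nat1r addrA.
Qed.

Lemma poch_opp m t : poch (- (m + t)%:R) m = (-1) ^+ m * (m + t)`!%:R / t`!%:R.
Proof.
elim: m => [|m IHm]; first by rewrite poch0 expr0 mul1r divff ?natr_fact_neq0.
rewrite pochSl addSn -natr1 opprD addrNK IHm exprS factS natrM.
by field; natr_neq0.
Qed.

Lemma poch_half m t :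
  poch (- (2 * m + t)%:R / 2) m * poch (- (2 * m + t)%:R / 2 + 1 / 2) m =
  (2 * m + t)`!%:R / (t`!%:R * 4 ^+ m).
Proof.
elim: m => [|m IHm]; first by rewrite !poch0 mulr1 expr0 mulr1 divff ?natr_fact_neq0.
rewrite !pochSl mulrACA.
have -> : (2 * m.+1 + t = (2 * m + t).+2)%N by lia.
have -> : - (2 * m + t).+2%:R / 2 + 1 = - (2 * m + t)%:R / 2 :> rat.
  by rewrite -!natr1 -addrA; field.
have -> : - (2 * m + t).+2%:R / 2 + 1 / 2 + 1 = - (2 * m + t)%:R / 2 + 1 / 2 :> rat.
  by rewrite -!natr1 -addrA; field.
rewrite IHm exprS !factS !natrM.
by field; natr_neq0.
Qed.

Lemma fclosed_hyp3F2 k r : fclosed k r.+1 =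
  (k + 2 * r)`!%:R * k.+1%:R / (dfact (2 * r))%:R *
  hyp3F2 1 (- (k.+1 + r)%:R) (- r%:R) (- (k + 2 * r)%:R / 2)
         (- (k + 2 * r)%:R / 2 + 1 / 2) r.
Proof.
rewrite /fclosed /fsum /hyp3F2 !mulr_sumr (reindex_inj rev_ord_inj) /=.
apply: eq_bigr => -[m lt_mr] _ /=.
have [t ->] : exists t, r = (m + t)%N by exists (r - m)%N; lia.
have -> : ((m + t).+1 - m.+1 = t)%N by lia.
have -> : (k.+1 + (m + t) = m + (t + k.+1))%N by lia.
have -> : (k + 2 * (m + t) = 2 * m + (k + 2 * t))%N by lia.
rewrite poch_half !poch_opp poch1 dfact_double /fterm.
have -> : (k + (m + t).+1 = m + (t + k.+1))%N by lia.
have -> : (2 * t + k = k + 2 * t)%N by lia.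
have exp4 i : (4 : rat) ^+ i = 2 ^+ i * 2 ^+ i by rewrite -exprMn -natrM.
rewrite -(addnS t k) !natrM !natrX exp4 (exp4 m) exprS exprD -signr_odd.
by case: (odd m); rewrite ?expr0 ?expr1; field; natr_neq0.
Qed.

Lemma fcount_fclosed k r : (fcount k.+1 (k + r).+2)%:R = fclosed k r.
Proof.
elim: r k => [|r IHr] k; first by rewrite addn0 fcount_eq0 ?fclosed0.
elim: k => [|k IHk].
  rewrite add0n fcountSS // fcount_dfact // natrD !natrM IHr fclosed0S mul1r.
  have -> : (2 * r.+2 - 4 = 2 * r)%N by lia.
  by have -> : (2 * r.+2 - 3 - 0 = (2 * r).+1)%N by lia.
rewrite addSn fcountSS; last lia.
rewrite natrD !natrM IHk addnS -addSn IHr fclosedSS.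
by congr (_ + _%:R * _); lia.
Qed.

Theorem lemma9 (n : nat) : (2 <= n)%N ->
  f_is 0 n (dfact (2 * n - 4)) /\
  (forall k : nat, (1 <= k <= n - 2)%N ->
     exists c : nat, f_is k n c /\
       (c%:R : rat) =
         ((2 * n - k - 5)`!)%:R * k%:R / (dfact (2 * n - 2 * k - 4))%:R *
         hyp3F2 1 (2%:R - n%:R) (k%:R + 2%:R - n%:R)
                ((k%:R + 5%:R) / 2%:R - n%:R) (k%:R / 2%:R - n%:R + 3%:R)
                (n - k - 2)).
Proof.
move=> n_ge2; split; first by rewrite -fcount_dfact //; apply: f_is_fcount; lia.
move=> [//|k] /andP[_ k_le]; exists (fcount k.+1 n).
split; first by apply: f_is_fcount; lia.
have [r ->] : exists r, n = (k + r.+1).+2 by exists (n - k - 3)%N; lia.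
rewrite fcount_fclosed fclosed_hyp3F2.
have -> : (2 * (k + r.+1).+2 - k.+1 - 5 = k + 2 * r)%N by lia.
have -> : (2 * (k + r.+1).+2 - 2 * k.+1 - 4 = 2 * r)%N by lia.
have -> : ((k + r.+1).+2 - k.+1 - 2 = r)%N by lia.
by congr (_ * hyp3F2 _ _ _ _ _ _); rewrite -!natr1 ?natrD -?natr1; field.
Qed.
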